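(* Let $\mathcal E$ be an evolution algebra of a ''chicken'' population (EACP) over a field $K$ with natural basis $\{h_1,\dots,h_n,r\}$ and matrix of structural constants $M=A\oplus \mathbf b$, where $A=(a_{ij})_{i,j=1}^n$ and $\mathbf b=(b_1,\dots,b_n)^T$. Then for every $m\geq 1$ and every $i=1,\dots,n$: \begin{itemize} \item[(i)] $R_r^m(h_i)=(A^m\mathbf h)_i+(A^{m-1}\mathbf b)_i\, r$; \item[(ii)] $(h_ir)^{[m]}=\gamma_m\left[(A^{m+1}\mathbf h)_i+(A^{m}\mathbf b)_i\, r\right]$, where the scalars $\gamma_m$ (depending on $i$) are defined recursively by $\gamma_1=2b_i$ and $\gamma_{m+1}=2\gamma_m^2\,(A^m\mathbf b)_i$. \end{itemize}
   Context: An EACP over a field $K$ is a $K$-algebra $\mathcal E$ with a basis $\{h_1,\dots,h_n,r\}$ (a natural basis) such that $h_ir=rh_i=\sum_{j=1}^n a_{ij}h_j+b_ir$, $h_ih_j=0$ for all $i,j=1,\dots,n$, and $rr=0$. Write $A^m=(a^{(m)}_{ij})$ for the $m$-th power of $A$ (with $A^0$ the identity matrix), $(A^m\mathbf h)_i=\sum_{j=1}^n a^{(m)}_{ij}h_j$, and $(A^m\mathbf b)_i=\sum_{j=1}^n a^{(m)}_{ij}b_j$. The right multiplication operator is $R_r(x)=xr$, and $R_r^m$ is its $m$-fold iterate. Plenary powers are defined by $a^{[1]}=a\cdot a$ and $a^{[m]}=a^{[m-1]}a^{[m-1]}$ for $m\geq 2$. *)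

From HB Require Import structures.
From mathcomp Require Import all_boot all_order all_algebra.
Set Implicit Arguments. Unset Strict Implicit. Unset Printing Implicit Defensive.
Import GRing.Theory.
Local Open Scope ring_scope.

(* m-th power of a square matrix, A^0 = identity (defined for every n,
   including n = 0, where 'M_n has no ring structure). *)
Definition mxpow (K : fieldType) (n : nat) (A : 'M[K]_n) (m : nat) : 'M[K]_n :=
  iter m (fun B => B *m A) 1%:M.

Definition Rmul_iter (V : Type) (mul : V -> V -> V) (r : V) (m : nat) (x : V) : V :=
  iter m (fun y => mul y r) x.

Definition plen (V : Type) (mul : V -> V -> V) (m : nat) (a : V) : V :=
  iter m (fun y => mul y y) a.

From HB Require Import structures.
From mathcomp Require Import all_boot all_order all_algebra.
From mathcomp Require Import ring.
Import GRing.Theory.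
Local Open Scope ring_scope.

(* Encode [sum_j u_j h_j + c r] by its coordinates [elt u c] with [u] a row.
   Right multiplication by [r] acts on coordinates as [(u, c) |-> (u A, u b)],
   and since the [h_j] annihilate each other, [r r = 0] and [h_j r = r h_j],
   squaring gives [elt u c * elt u c = 2c (elt u c * r)]: each plenary step
   is one more step of [R_r], scaled by twice the current [r]-coordinate,
   which is where the recursion for [gamma] comes from. *)

Section Bilinear.

Context {K : fieldType} {V : lmodType K} {mul : V -> V -> V}.
Hypothesis mulDl : forall x y z, mul (x + y) z = mul x z + mul y z.
Hypothesis mulDr : forall x y z, mul x (y + z) = mul x y + mul x z.
Hypothesis mulZl : forall (c : K) x y, mul (c *: x) y = c *: mul x y.
Hypothesis mulZr : forall (c : K) x y, mul x (c *: y) = c *: mul x y.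

Lemma mul0l z : mul 0 z = 0.
Proof. by have := mulZl 0 0 z; rewrite !scale0r. Qed.

Lemma mul0r z : mul z 0 = 0.
Proof. by have := mulZr 0 z 0; rewrite !scale0r. Qed.

Lemma mul_suml (I : Type) (s : seq I) (P : pred I) (F : I -> V) z :
  mul (\sum_(i <- s | P i) F i) z = \sum_(i <- s | P i) mul (F i) z.
Proof. exact: (big_morph (mul^~ z) (fun x y => mulDl x y z) (mul0l z)). Qed.

Lemma mul_sumr (I : Type) (s : seq I) (P : pred I) (F : I -> V) z :
  mul z (\sum_(i <- s | P i) F i) = \sum_(i <- s | P i) mul z (F i).
Proof. exact: (big_morph (mul z) (mulDr z) (mul0r z)). Qed.

Lemma mulZZ (k : K) x : mul (k *: x) (k *: x) = k ^+ 2 *: mul x x.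
Proof. by rewrite mulZl mulZr scalerA -expr2. Qed.

End Bilinear.

Lemma mxpow1 {K : fieldType} {n : nat} (A : 'M[K]_n) : mxpow A 1 = A.
Proof. exact: mul1mx. Qed.

Lemma mxpow0 {K : fieldType} {n : nat} (A : 'M[K]_n) : mxpow A 0 = 1%:M.
Proof. by []. Qed.

Lemma mxpowS {K : fieldType} {n : nat} (A : 'M[K]_n) (m : nat) :
  mxpow A m.+1 = mxpow A m *m A.
Proof. by []. Qed.

Lemma delta_mx_mulE {K : fieldType} {n : nat} (i : 'I_n) (w : 'cV[K]_n) :
  ((delta_mx 0 i : 'rV[K]_n) *m w) 0 0 = w i 0.
Proof. by rewrite -rowE mxE. Qed.

Section EACP.

Context {K : fieldType} {n : nat} {V : lmodType K} {mul : V -> V -> V}.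
Hypothesis mulDl : forall x y z, mul (x + y) z = mul x z + mul y z.
Hypothesis mulDr : forall x y z, mul x (y + z) = mul x y + mul x z.
Hypothesis mulZl : forall (c : K) x y, mul (c *: x) y = c *: mul x y.
Hypothesis mulZr : forall (c : K) x y, mul x (c *: y) = c *: mul x y.

Context {h : 'I_n -> V} {r : V} {A : 'M[K]_n} {b : 'cV[K]_n}.
Hypothesis hr : forall i, mul (h i) r = \sum_(j < n) A i j *: h j + b i ord0 *: r.
Hypothesis rh : forall i, mul r (h i) = \sum_(j < n) A i j *: h j + b i ord0 *: r.
Hypothesis hh : forall i j, mul (h i) (h j) = 0.
Hypothesis rr : mul r r = 0.

Definition hsum (u : 'rV[K]_n) : V := \sum_(j < n) u 0 j *: h j.

Definition elt (u : 'rV[K]_n) (c : K) : V := hsum u + c *: r.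

Lemma h_elt i : h i = elt (delta_mx 0 i) 0.
Proof.
rewrite /elt /hsum scale0r addr0 (bigD1 i) //= big1 => [|j /negbTE ji].
  by rewrite mxE !eqxx scale1r addr0.
by rewrite mxE ji andbF scale0r.
Qed.

Lemma elt_delta i (M : 'M[K]_n) (w : 'cV[K]_n) :
  elt (delta_mx 0 i *m M) (((delta_mx 0 i : 'rV_n) *m w) 0 0)
    = \sum_(j < n) M i j *: h j + w i 0 *: r.
Proof.
rewrite /elt /hsum delta_mx_mulE -rowE; congr (_ + _).
by apply: eq_bigr => j _; rewrite mxE.
Qed.

Lemma mul_hsum_r u : mul (hsum u) r = elt (u *m A) ((u *m b) 0 0).
Proof.
rewrite /hsum (mul_suml mulDl mulZl).
under eq_bigr do rewrite mulZl hr scalerDr scaler_sumr.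
rewrite big_split /= exchange_big /= /elt /hsum mxE scaler_suml.
congr (_ + _); last by apply: eq_bigr => j _; rewrite scalerA.
apply: eq_bigr => k _; rewrite mxE scaler_suml.
by apply: eq_bigr => j _; rewrite scalerA.
Qed.

Lemma mul_r_hsum u : mul r (hsum u) = mul (hsum u) r.
Proof.
rewrite /hsum (mul_sumr mulDr mulZr) (mul_suml mulDl mulZl).
by apply: eq_bigr => j _; rewrite mulZr mulZl hr rh.
Qed.

Lemma mul_hsum_self u : mul (hsum u) (hsum u) = 0.
Proof.
rewrite {1}/hsum (mul_suml mulDl mulZl) big1 // => j _.
rewrite /hsum (mul_sumr mulDr mulZr) big1 // => k _.
by rewrite mulZl mulZr hh !scaler0.
Qed.

Lemma mul_elt_r u c : mul (elt u c) r = elt (u *m A) ((u *m b) 0 0).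
Proof. by rewrite /elt mulDl mulZl rr scaler0 addr0 mul_hsum_r. Qed.

Lemma mul_elt_self u c :
  mul (elt u c) (elt u c) = (2 * c) *: elt (u *m A) ((u *m b) 0 0).
Proof.
rewrite [in LHS]/elt !mulDl !mulDr mul_hsum_self !mulZl !mulZr rr mul_r_hsum.
by rewrite mul_hsum_r !scaler0 addr0 add0r -scalerDl -mulr2n mulr_natl.
Qed.

Lemma Rmul_iter_elt u c m :
  Rmul_iter mul r m.+1 (elt u c)
    = elt (u *m mxpow A m.+1) ((u *m mxpow A m *m b) 0 0).
Proof.
elim: m => [|m IH]; first by rewrite mxpow1 mxpow0 mulmx1 -(mul_elt_r u c).
rewrite /Rmul_iter iterS -/(Rmul_iter mul r m.+1 (elt u c)) IH.
by rewrite mul_elt_r mxpowS !mulmxA.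
Qed.

Lemma plen_mul_elt_r u c (g : nat -> K) :
  g 1%N = 2 * (u *m b) 0 0 ->
  (forall m, (1 <= m)%N -> g m.+1 = 2 * g m ^+ 2 * (u *m mxpow A m *m b) 0 0) ->
  forall m, (1 <= m)%N ->
    plen mul m (mul (elt u c) r)
      = g m *: elt (u *m mxpow A m.+1) ((u *m mxpow A m *m b) 0 0).
Proof.
move=> g1 gS [//|m] _; elim: m => [|m IH].
  by rewrite mxpowS mxpow1 mulmxA g1 -mul_elt_self -(mul_elt_r u c).
rewrite /plen iterS -/(plen mul m.+1 (mul (elt u c) r)) IH.
rewrite (mulZZ mulZl mulZr) mul_elt_self scalerA.
by rewrite (gS m.+1) // (mxpowS A m.+2) mulmxA; congr (_ *: _); ring.
Qed.

End EACP.

Theorem proposition3p1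
  (K : fieldType) (n : nat) (V : lmodType K) (mul : V -> V -> V)
  (* mul is K-bilinear (evolution algebras are not associative) *)
  (mulDl : forall x y z, mul (x + y) z = mul x z + mul y z)
  (mulDr : forall x y z, mul x (y + z) = mul x y + mul x z)
  (mulZl : forall (c : K) x y, mul (c *: x) y = c *: mul x y)
  (mulZr : forall (c : K) x y, mul x (c *: y) = c *: mul x y)
  (h : 'I_n -> V) (r : V)
  (* {h_1, ..., h_n, r} is a basis of V *)
  (hfree : forall (c : 'I_n -> K) (d : K),
      \sum_(j < n) c j *: h j + d *: r = 0 -> (forall j, c j = 0) /\ d = 0)
  (hspan : forall x : V, exists (c : 'I_n -> K) (d : K),
      x = \sum_(j < n) c j *: h j + d *: r)
  (A : 'M[K]_n) (b : 'cV[K]_n)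
  (hr : forall i, mul (h i) r = \sum_(j < n) A i j *: h j + b i ord0 *: r)
  (rh : forall i, mul r (h i) = \sum_(j < n) A i j *: h j + b i ord0 *: r)
  (hh : forall i j, mul (h i) (h j) = 0)
  (rr : mul r r = 0)
  (gamma : 'I_n -> nat -> K)
  (gamma1 : forall i, gamma i 1%N = 2 * b i ord0)
  (gammaS : forall i m, (1 <= m)%N ->
      gamma i m.+1 = 2 * gamma i m ^+ 2 * (mxpow A m *m b) i ord0) :
  forall (m : nat) (i : 'I_n), (1 <= m)%N ->
    Rmul_iter mul r m (h i)
      = \sum_(j < n) mxpow A m i j *: h j + (mxpow A m.-1 *m b) i ord0 *: r
    /\
    plen mul m (mul (h i) r)
      = gamma i m *: (\sum_(j < n) mxpow A m.+1 i j *: h j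
                      + (mxpow A m *m b) i ord0 *: r).
Proof.
move=> [//|m] i _; rewrite (h_elt (r := r) i); split.
  by rewrite (Rmul_iter_elt mulDl mulZl hr rr) -mulmxA elt_delta.
rewrite (plen_mul_elt_r mulDl mulDr mulZl mulZr hr rh hh rr _ _ (gamma i)) //.
- by rewrite -mulmxA elt_delta.
- by rewrite delta_mx_mulE gamma1.
by move=> k k_ge1; rewrite gammaS // -mulmxA delta_mx_mulE.
Qed.
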